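(* Let $t$ be a positive integer and let $M$ be a $t$-spike of order $r$. Then $r \ge 2t-1$.
   Context: For a positive integer $t$, a matroid $M$ is a $t$-spike of order $r$ (where $r\ge t$) if there is a partition $(A_1,\ldots,A_r)$ of $E(M)$ into 2-element sets (arms) such that, for every $t$-element subset $J\subseteq\{1,\dots,r\}$, the set $\bigcup_{j\in J}A_j$ is both a circuit and a cocircuit of $M$. *)

From mathcomp Require Import all_boot.
Set Implicit Arguments. Unset Strict Implicit. Unset Printing Implicit Defensive.

(* A matroid whose ground set is the whole finite type T, given by its
   independent sets (axioms I1-I3). *)
Record matroid (T : finType) := Matroid {
  indep : {set T} -> bool;
  indep_set0 : indep set0;
  indep_subset : forall X Y : {set T}, Y \subset X -> indep X -> indep Y;
  indep_augment : forall X Y : {set T}, indep X -> indep Y -> #|X| < #|Y| ->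
      exists2 y, y \in Y :\: X & indep (y |: X)
}.

Section MatroidNotions.
Variables (T : finType) (M : matroid T).

Definition is_basis (B : {set T}) : Prop :=
  indep M B /\ (forall X : {set T}, indep M X -> B \subset X -> X = B).

Definition is_circuit (C : {set T}) : Prop :=
  ~~ indep M C /\ (forall X : {set T}, X \proper C -> indep M X).

(* independent sets of the dual M^*: sets avoiding some basis of M *)
Definition coindep (X : {set T}) : Prop :=
  exists2 B, is_basis B & [disjoint X & B].

Definition is_cocircuit (C : {set T}) : Prop :=
  ~ coindep C /\ (forall X : {set T}, X \proper C -> coindep X).

Definition is_spike (t r : nat) : Prop :=
  t <= r /\
  exists A : 'I_r -> {set T},
    [/\ (forall i, #|A i| = 2),
        (forall i j, i != j -> [disjoint A i & A j]),
        \bigcup_(i < r) A i = [set: T] &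
        (forall J : {set 'I_r}, #|J| = t ->
           is_circuit (\bigcup_(j in J) A j) /\ is_cocircuit (\bigcup_(j in J) A j))].

End MatroidNotions.

(* A circuit C that is also a cocircuit gives, for any e in C, the set C - e
   which is both independent and coindependent.  Being independent, it is no
   larger than any basis; being coindependent, it misses some basis B, which
   then lies in (E - C) + e.  Hence |C| - 1 <= |E| - |C| + 1.  In a t-spike of
   order r the union of t arms is such a set with 2t elements and |E| = 2r. *)
From mathcomp Require Import all_boot.
From mathcomp Require Import zify.

Set Implicit Arguments.
Unset Strict Implicit.
Unset Printing Implicit Defensive.

Lemma card_bigcup_disjoint (I T : finType) (F : I -> {set T}) :
  (forall i j, i != j -> [disjoint F i & F j]) ->
  #|\bigcup_i F i| = \sum_i #|F i|.
Proof.
move=> disjF; rewrite -sum1_card (partition_disjoint_bigcup _ _ disjF).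
by apply: eq_bigr => i _; rewrite sum1_card.
Qed.

Lemma card_bigcup_pairs (I T : finType) (A : I -> {set T}) (J : {set I}) :
  (forall i, #|A i| = 2) -> (forall i j, i != j -> [disjoint A i & A j]) ->
  #|\bigcup_(i in J) A i| = 2 * #|J|.
Proof.
move=> cardA disjA.
pose F i := if i \in J then A i else set0.
have disjF i j : i != j -> [disjoint F i & F j].
  move=> ij; rewrite /F -setI_eq0.
  by case: ifP => _; case: ifP => _; rewrite ?setI0 ?set0I // setI_eq0 disjA.
rewrite big_mkcond card_bigcup_disjoint // -/F.
rewrite (eq_bigr (fun i => if i \in J then 2 else 0)); last first.
  by move=> i _; rewrite /F; case: ifP; rewrite ?cards0.
by rewrite -big_mkcond sum_nat_const mulnC.
Qed.

Lemma exists_set_of_card (I : finType) (n : nat) :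
  n <= #|I| -> exists J : {set I}, #|J| = n.
Proof.
case/card_geqP=> s [uniq_s size_s _]; exists [set i in s].
by rewrite cardsE -size_s; apply/card_uniqP.
Qed.

Section CircuitCocircuit.
Variables (T : finType) (M : matroid T).

Lemma indep_leq_card_basis (I B : {set T}) :
  indep M I -> is_basis M B -> #|I| <= #|B|.
Proof.
move=> indI [indB maxB]; rewrite leqNgt; apply/negP => ltBI.
have [y /setDP[_ yNB] indyB] := indep_augment indB indI ltBI.
by move: yNB; rewrite -(maxB _ indyB (subsetUr _ _)) setU11.
Qed.

Lemma circuit_neq0 (C : {set T}) : is_circuit M C -> C != set0.
Proof. by case=> depC _; apply: contraNneq depC => ->; exact: indep_set0. Qed.

Lemma circuit_cocircuit_card_bound (C : {set T}) :
  is_circuit M C -> is_cocircuit M C -> #|C| + #|C| <= #|T| + 2.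
Proof.
move=> circC [_ cominC]; have [e eC] := set0Pn _ (circuit_neq0 circC).
have properCe := properD1 eC.
have [B basisB disjB] := cominC _ properCe.
have leCeB : #|C :\ e| <= #|B|.
  exact: indep_leq_card_basis (circC.2 _ properCe) basisB.
have subB : B \subset e |: ~: C.
  apply/subsetP => x xB; rewrite !inE; have [//|xNe /=] := eqVneq x e.
  by apply: contraL xB => xC; rewrite (disjointFr disjB) // !inE xNe.
have leB : #|B| <= #|~: C| + 1.
  by rewrite (leq_trans (subset_leq_card subB)) // cardsU1 addnC leq_add2l leq_b1.
have := leq_trans leCeB leB; rewrite -(cardsC C) (cardsD1 e C) eC /=.
by move: #|C :\ e| #|~: C| => m n; lia.
Qed.

End CircuitCocircuit.

Theorem lemma6p1 (T : finType) (M : matroid T) (t r : nat) :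
  0 < t -> is_spike M t r -> 2 * t - 1 <= r.
Proof.
move=> _ [le_tr [A [cardA disjA coverA spikeA]]].
have cardT : #|T| = 2 * r.
  rewrite -cardsT -coverA card_bigcup_disjoint // (eq_bigr _ (fun i _ => cardA i)).
  by rewrite sum_nat_const card_ord mulnC.
have [J cardJ] : exists J : {set 'I_r}, #|J| = t by apply: exists_set_of_card; rewrite card_ord.
have [circ cocirc] := spikeA J cardJ.
have := circuit_cocircuit_card_bound circ cocirc.
by rewrite card_bigcup_pairs // cardJ cardT; lia.
Qed.
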